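(* Let $a_0,a_1,\ldots$ be a sequence of integers satisfying a linear recurrence $a_{n+k}=c_{k-1}a_{n+k-1}+\cdots+c_0a_n$ for all sufficiently large $n$, with characteristic polynomial $\chi(x)=x^k-c_{k-1}x^{k-1}-\cdots-c_0$ whose complex roots $r_1,\ldots,r_k$ are pairwise distinct, and let $\beta_1,\ldots,\beta_k\in\mathbb{C}$ be such that $a_n=\sum_{i=1}^k\beta_i r_i^n$ for all sufficiently large $n$. Suppose $\chi(x)=\chi_1(x)\chi_2(x)\cdots\chi_j(x)$ where each $\chi_i(x)$ is a polynomial irreducible over $\mathbb{Q}$. If $r_{i_1},\ldots,r_{i_d}$ are the roots of $\chi_1(x)$, then either $\beta_{i_1}=\cdots=\beta_{i_d}=0$, or all of $\beta_{i_1},\ldots,\beta_{i_d}$ are nonzero.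
   Context: It is a standard fact that when the roots of $\chi$ are distinct, such coefficients $\beta_1,\dots,\beta_k$ exist. *)

From mathcomp Require Import all_boot all_order all_algebra.
Set Implicit Arguments. Unset Strict Implicit. Unset Printing Implicit Defensive.
Import Order.TTheory GRing.Theory Num.Theory.
Local Open Scope ring_scope.

Definition rec_charpoly (k : nat) (c : 'I_k -> int) : {poly rat} :=
  'X^k - \sum_(i < k) ((c i)%:~R)%:P * 'X^i.

Definition eventually_satisfies_rec (k : nat) (c : 'I_k -> int)
  (a : nat -> int) : Prop :=
  exists N : nat, forall n : nat, (N <= n)%N ->
    a (n + k)%N = \sum_(i < k) c i * a (n + i)%N.

From mathcomp Require Import all_boot all_order all_algebra.
From mathcomp Require Import ring.
Import Order.TTheory GRing.Theory Num.Theory.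
Set Implicit Arguments. Unset Strict Implicit. Unset Printing Implicit Defensive.
Local Open Scope ring_scope.

(* Let P = prod_l (X - r_l) and D_y = (P - P(y)) / (X - y).  The value
   V(y) = sum_l beta_l r_l^N D_y(r_l) is a polynomial in y whose coefficients
   are rational combinations of the a_(N+n), so V has rational coefficients.
   At y = r_i only the term l = i survives, V(r_i) = beta_i r_i^N P'(r_i),
   and P'(r_i) = prod_(j <> i) (r_i - r_j) != 0 as the roots are simple.
   A rational polynomial vanishing at one root of the irreducible chi_1
   vanishes at all of them, hence beta_i vanishes at one root of chi_1 iff
   at all (a zero root being the single root of chi_1 = X). *)

Section DifferenceQuotient.
Variable R : comNzRingType.
Implicit Types (p : {poly R}) (x y : R) (s : nat -> R).

Definition diffq p y : {poly R} :=
  \sum_(m < size p) (p`_m)%:P * \sum_(i < m) 'X^(m.-1 - i) * (y%:P) ^+ i.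

Lemma diffqE p y : ('X - y%:P) * diffq p y = p - (p.[y])%:P.
Proof.
have pE : p = \sum_(m < size p) p`_m *: 'X^m by rewrite -poly_def coefK.
rewrite /diffq mulr_sumr horner_coef [X in _ = X - _]pE rmorph_sum -sumrB.
apply: eq_bigr => m _.
by rewrite mulrCA -subrXX mulrBr mul_polyC rmorphM rmorphXn /= -mul_polyC.
Qed.

Lemma horner_diffq p y x : (diffq p y).[x] =
  \sum_(m < size p) p`_m * \sum_(i < m) x ^+ (m.-1 - i) * y ^+ i.
Proof.
rewrite /diffq horner_sum; apply: eq_bigr => m _.
rewrite hornerM hornerC horner_sum; congr (_ * _); apply: eq_bigr => i _.
by rewrite hornerM hornerXn -rmorphXn hornerC.
Qed.

(* The polynomial V of the header, expressed through the moments
   s_n = sum_l w_l x_l^n alone (see horner_moment_poly). *)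
Definition moment_poly p s : {poly R} :=
  \sum_(m < size p) \sum_(i < m) (p`_m * s (m.-1 - i)%N)%:P * 'X^i.

Lemma horner_moment_poly (I : finType) (w x : I -> R) p s y :
    (forall n, s n = \sum_(l : I) w l * x l ^+ n) ->
  (moment_poly p s).[y] = \sum_(l : I) w l * (diffq p y).[x l].
Proof.
move=> sE; under [RHS]eq_bigr => l _ do rewrite horner_diffq mulr_sumr.
rewrite exchange_big horner_sum; apply: eq_bigr => m _ /=.
under [RHS]eq_bigr => l _ do rewrite !mulr_sumr.
rewrite exchange_big horner_sum; apply: eq_bigr => i _ /=.
rewrite hornerM hornerC hornerXn sE mulr_sumr mulr_suml.
by apply: eq_bigr => l _; ring.
Qed.

End DifferenceQuotient.

Lemma map_moment_poly (F : fieldType) (R : comNzRingType) (f : {rmorphism F -> R})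
    (p : {poly F}) (s : nat -> F) :
  map_poly f (moment_poly p s) = moment_poly (map_poly f p) (f \o s).
Proof.
rewrite /moment_poly size_map_poly rmorph_sum; apply: eq_bigr => m _.
rewrite rmorph_sum; apply: eq_bigr => i _.
by rewrite rmorphM /= map_polyC map_polyXn coef_map /= -rmorphM.
Qed.

Section DistinctRoots.
Variables (R : idomainType) (I : finType) (r : I -> R).

Let P := \prod_(l : I) ('X - (r l)%:P).

Lemma diffq_prod_XsubC i : diffq P (r i) = \prod_(l | l != i) ('X - (r l)%:P).
Proof.
apply: (@mulfI _ ('X - (r i)%:P)); first by rewrite polyXsubC_eq0.
have Pri : P.[r i] = 0.
  by rewrite horner_prod (bigD1 i) //= hornerXsubC subrr mul0r.
by rewrite diffqE Pri subr0 /P (bigD1 i).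
Qed.

Lemma horner_diffq_prod_XsubC i l : (diffq P (r i)).[r l] =
  if l == i then \prod_(j | j != i) (r i - r j) else 0.
Proof.
rewrite diffq_prod_XsubC horner_prod; case: eqP => [->|/eqP li].
  by apply: eq_bigr => j _; rewrite hornerXsubC.
by rewrite (bigD1 l) //= hornerXsubC subrr mul0r.
Qed.

Lemma horner_moment_poly_prod_XsubC (w : I -> R) s i :
    (forall n, s n = \sum_(l : I) w l * r l ^+ n) ->
  (moment_poly P s).[r i] = w i * \prod_(j | j != i) (r i - r j).
Proof.
move=> sE; rewrite (horner_moment_poly _ _ sE) (bigD1 i) //=.
rewrite horner_diffq_prod_XsubC eqxx [X in _ + X]big1 ?addr0 // => l li.
by rewrite horner_diffq_prod_XsubC (negbTE li) mulr0.
Qed.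

Lemma prod_subr_neq0 i : injective r -> \prod_(j | j != i) (r i - r j) != 0.
Proof.
move=> r_inj; apply/prodf_neq0 => j ji; rewrite subr_eq0.
by apply: contra_neq ji => /r_inj ->.
Qed.

End DistinctRoots.

Section IrreducibleRoots.
Variables (F : fieldType) (R : idomainType) (f : {rmorphism F -> R}).
Variable p : {poly F}.
Hypothesis irr_p : irreducible_poly p.

Lemma irredp_map_dvdp q x :
  root (map_poly f p) x -> root (map_poly f q) x -> p %| q.
Proof.
move=> px qx; rewrite -[p %| q]negbK -irreducible_poly_coprime //.
by rewrite -(coprimep_map f); apply: contraL qx => /coprimep_root/(_ px).
Qed.

Lemma irredp_map_root q x y : root (map_poly f p) x -> root (map_poly f q) x ->
  root (map_poly f p) y -> root (map_poly f q) y.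
Proof.
move=> px qx; apply: root_dvdp; rewrite dvdp_map.
exact: irredp_map_dvdp px qx.
Qed.

Lemma irredp_map_root0 y : root (map_poly f p) 0 -> root (map_poly f p) y -> y = 0.
Proof.
move=> p0 py; apply/eqP; have := irredp_map_root (q := 'X) p0 _ py.
by rewrite map_polyX /root !hornerX; apply.
Qed.

End IrreducibleRoots.

Lemma all_or_none (I : finType) (S P : pred I) :
    (forall i j, S i -> S j -> P i -> P j) ->
  (forall i, S i -> P i) \/ (forall i, S i -> ~~ P i).
Proof.
move=> PS; have [/existsP [i /andP [Si Pi]] | none] := boolP [exists i, S i && P i].
  by left => j Sj; apply: PS Pi.
by right => i Si; apply: contra none => Pi; apply/existsP; exists i; rewrite Si.
Qed.

Theorem mainTheorem3 (C : numClosedFieldType)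
  (a : nat -> int) (k : nat) (c : 'I_k -> int)
  (r : 'I_k -> C) (beta : 'I_k -> C)
  (chi1 : {poly rat}) (chis : seq {poly rat}) :
  eventually_satisfies_rec c a ->
  map_poly ratr (rec_charpoly c) = \prod_(i < k) ('X - (r i)%:P) ->
  injective r ->
  (exists N : nat, forall n : nat, (N <= n)%N ->
      (a n)%:~R = \sum_(i < k) beta i * r i ^+ n) ->
  rec_charpoly c = chi1 * \prod_(q <- chis) q ->
  irreducible_poly chi1 ->
  (forall q : {poly rat}, q \in chis -> irreducible_poly q) ->
  (forall i : 'I_k, root (map_poly ratr chi1) (r i) -> beta i = 0) \/
  (forall i : 'I_k, root (map_poly ratr chi1) (r i) -> beta i != 0).
Proof.
move=> _ chiE r_inj [N aE] _ irr_chi1 _.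
pose V := moment_poly (rec_charpoly c) (fun n => (a (N + n)%N)%:~R).
pose w l := beta l * r l ^+ N.
have VE i : (map_poly ratr V).[r i] = w i * \prod_(j | j != i) (r i - r j).
  rewrite map_moment_poly chiE (horner_moment_poly_prod_XsubC _ (w := w)) // => n /=.
  rewrite rmorph_int aE ?leq_addr //.
  by apply: eq_bigr => l _; rewrite exprD mulrA.
case: (all_or_none (S := fun i => root (map_poly ratr chi1) (r i))
                   (P := fun i => beta i == 0)).
- move=> i j ri rj /eqP bi0; have [<- | ij] := eqVneq i j; first by rewrite bi0.
  have rj0 : r j != 0.
    apply: contra_neq ij => rj0; apply: r_inj; rewrite rj0.
    by apply: (irredp_map_root0 irr_chi1 _ ri); rewrite -rj0.
  have : root (map_poly ratr V) (r j).
    by apply: (irredp_map_root irr_chi1 ri _ rj); rewrite /root VE /w bi0 !mul0r.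
  rewrite /root VE /w !mulf_eq0 (negbTE (prod_subr_neq0 _ r_inj)) expf_eq0.
  by rewrite (negbTE rj0) andbF !orbF.
- by move=> all0; left => i /all0/eqP.
- by move=> none; right.
Qed.
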